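(* Let $f:\mathbb{R}^n\to\mathbb{R}^n$ be continuously differentiable and monotone, and let $q:\mathbb{R}^n\to\mathbb{R}\cup\{+\infty\}$ be proper, convex and lower semicontinuous. Given $x\in\mathbb{R}^n$ and $d\in\mathrm{dom}\,\partial q$, define \[\mu_f(x)=\min\{\langle\nabla f(x)u,u\rangle:\|u\|=1\},\] \[\mu_q(d)=\lim_{\rho\downarrow0}\inf\Bigl\{\frac{\langle d_1^*-d_2^*,d_1-d_2\rangle}{\|d_1-d_2\|^2}: d_i\in\mathcal{B}_\rho(d),\ (d_i,d_i^* )\in\mathrm{gph}\,\partial q,\ i=1,2,\ d_1\ne d_2\Bigr\}.\] Then for every $d^*\in\partial q(d)$, \[\min_{\|s\|=1}\operatorname{dist}\bigl(0,\nabla f(x)^Ts+D^*(\partial q)(d,d^* )(s)\bigr)\ge\mu_f(x)+\mu_q(d).\]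
   Context: $f$ monotone means $\langle f(x_2)-f(x_1),x_2-x_1\rangle\ge0$ for all $x_1,x_2$. $\mathcal{B}_\rho(d)$ is the closed ball of radius $\rho$ around $d$. The limiting coderivative is $D^*F(\bar x,\bar y)(v^* )=\{u^*:(u^*,-v^* )\in N_{\mathrm{gph}\, F}(\bar x,\bar y)\}$, where $N_C(\bar z)$ is the limiting (Mordukhovich) normal cone: the set of limits of $z_k^*\in\widehat N_C(z_k)$ with $z_k\to\bar z$ in $C$, and $\widehat N_C(z)$ is the polar of the contingent cone $T_C(z)=\{w:\exists t_k\downarrow0,w_k\to w,\ z+t_kw_k\in C\}$. *)

From HB Require Import structures.
From mathcomp Require Import all_boot all_order all_algebra.
From mathcomp Require Import all_classical all_reals all_analysis.
Set Implicit Arguments. Unset Strict Implicit. Unset Printing Implicit Defensive.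
Import Order.TTheory GRing.Theory Num.Theory.
Import numFieldNormedType.Exports.
Local Open Scope classical_set_scope.
Local Open Scope ring_scope.

Section Defs.
Variables (R : realType) (n : nat).
Local Notation V := 'rV[R]_n.

Definition dotv (u v : V) : R := \sum_(i < n) u ord0 i * v ord0 i.
Definition enorm (u : V) : R := Num.sqrt (dotv u u).

Definition eball (d : V) (rho : R) : set V := [set y | enorm (y - d) <= rho].

Definition dotp (z w : V * V) : R := dotv z.1 w.1 + dotv z.2 w.2.

Definition monotone_map (f : V -> V) : Prop :=
  forall x1 x2 : V, 0 <= dotv (f x2 - f x1) (x2 - x1).

(* f continuously differentiable: differentiable everywhere, and the
   Jacobian x |-> 'J f x is continuous. With row vectors, the derivative acts
   as  h |-> h *m 'J f x  (lemma deriveEjacobian). *)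
Definition C1 (f : V -> V) : Prop :=
  (forall x, differentiable f x) /\ continuous (fun x => jacobian f x).

Definition proper_fun (q : V -> \bar R) : Prop :=
  (forall x, q x != -oo%E) /\ (exists x, q x \is a fin_num).

Definition convex_fun (q : V -> \bar R) : Prop :=
  forall (x y : V) (t : R), 0 < t < 1 ->
    (q (t *: x + (1 - t) *: y)%R <= t%:E * q x + (1 - t)%:E * q y)%E.

Definition lsc_fun (q : V -> \bar R) : Prop :=
  forall (x : V) (a : R), (a%:E < q x)%E -> \forall y \near x, (a%:E < q y)%E.

Definition subdiff (q : V -> \bar R) (d : V) : set V :=
  [set v | q d \is a fin_num /\
           forall y : V, (q d + (dotv v (y - d)%R)%:E <= q y)%E].

Definition dom_subdiff (q : V -> \bar R) : set V :=
  [set d | subdiff q d !=set0].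

Definition gph_subdiff (q : V -> \bar R) : set (V * V) :=
  [set z | subdiff q z.1 z.2].

Definition tangent_cone (C : set (V * V)) (z : V * V) : set (V * V) :=
  [set w | exists (t : nat -> R) (wk : nat -> V * V),
     (forall k, 0 < t k) /\ t @ \oo --> 0 /\ wk @ \oo --> w /\
     (forall k, C (z + t k *: wk k))].

Definition reg_normal (C : set (V * V)) (z : V * V) : set (V * V) :=
  [set zs | forall w, tangent_cone C z w -> dotp zs w <= 0].

Definition lim_normal (C : set (V * V)) (z : V * V) : set (V * V) :=
  [set zs | exists (zk zsk : nat -> V * V),
     (forall k, C (zk k)) /\ zk @ \oo --> z /\
     (forall k, reg_normal C (zk k) (zsk k)) /\ zsk @ \oo --> zs].

Definition coderiv_subdiff (q : V -> \bar R) (d ds v : V) : set V :=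
  [set u | lim_normal (gph_subdiff q) (d, ds) (u, - v)].

(* distance from 0 to a set (+oo for the empty set) *)
Definition dist0 (S : set V) : \bar R := ereal_inf [set (enorm y)%:E | y in S].

Definition mu_f (f : V -> V) (x : V) : \bar R :=
  ereal_inf [set (dotv (u *m jacobian f x) u)%:E | u in [set u | enorm u = 1]].

Definition mu_q_rho (q : V -> \bar R) (d : V) (rho : R) : \bar R :=
  ereal_inf [set r | exists d1 d1s d2 d2s : V,
     [/\ eball d rho d1 /\ eball d rho d2, subdiff q d1 d1s, subdiff q d2 d2s,
         d1 != d2 &
         r = (dotv (d1s - d2s) (d1 - d2) / (enorm (d1 - d2)) ^+ 2)%:E]].

Definition mu_q (q : V -> \bar R) (d : V) : \bar R :=
  lim (mu_q_rho q d @ (0 : R)^'+).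

End Defs.

(* Let mu be a lower bound for the infimum defining mu_q q d on a ball B_rho(d),
   so that the subdifferential of q is mu-strongly monotone on that ball, and let
   (u, -s) be a regular normal to gph ∂q at a point (x, y) inside the ball.  For
   c > 0 the proximal points of x + y/c - λ s, which exist because q is proper,
   convex and lsc, yield as λ -> 0 a tangent direction (z, -c (z + s)) to the
   graph.  Normality gives <u, z> + c <s, z + s> <= 0 and strong monotonicity
   gives mu |z|^2 <= -c <z + s, z>; eliminating z,
   4 (c + mu) (<u, s> - mu |s|^2) >= -|u - 2 mu s|^2, and c -> +oo yields
   mu |s|^2 <= <u, s>.  This passes to limiting normals, hence to the
   coderivative, and then to the limit mu_q q d.  Together with
   mu_f f x <= <∇f(x) s, s>, Cauchy-Schwarz against the unit vector s bounds
   |∇f(x)^T s + u| from below. *)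

From HB Require Import structures.
From mathcomp Require Import all_boot all_order all_algebra.
From mathcomp Require Import all_classical all_reals all_analysis.
From mathcomp Require Import lra ring.
Import Order.TTheory GRing.Theory Num.Theory.
Import numFieldNormedType.Exports.
Local Open Scope classical_set_scope.
Local Open Scope ring_scope.

Section dotv_theory.
Context {R : realType} {n : nat}.
Implicit Types (u v w : 'rV[R]_n).

Lemma dotvC u v : dotv u v = dotv v u.
Proof. by apply: eq_bigr => i _; rewrite mulrC. Qed.

Lemma dotvDl u v w : dotv (u + v) w = dotv u w + dotv v w.
Proof. by rewrite /dotv -big_split; apply: eq_bigr => i _; rewrite mxE mulrDl. Qed.

Lemma dotvZl a u w : dotv (a *: u) w = a * dotv u w.
Proof. by rewrite /dotv mulr_sumr; apply: eq_bigr => i _; rewrite mxE mulrA. Qed.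

Lemma dotvNl u w : dotv (- u) w = - dotv u w.
Proof. by rewrite -scaleN1r dotvZl mulN1r. Qed.

Lemma dotvBl u v w : dotv (u - v) w = dotv u w - dotv v w.
Proof. by rewrite dotvDl dotvNl. Qed.

Lemma dotvDr u v w : dotv w (u + v) = dotv w u + dotv w v.
Proof. by rewrite dotvC dotvDl !(dotvC w). Qed.

Lemma dotvZr a u w : dotv w (a *: u) = a * dotv w u.
Proof. by rewrite dotvC dotvZl dotvC. Qed.

Lemma dotvNr u w : dotv w (- u) = - dotv w u.
Proof. by rewrite dotvC dotvNl dotvC. Qed.

Lemma dotvBr u v w : dotv w (u - v) = dotv w u - dotv w v.
Proof. by rewrite dotvDr dotvNr. Qed.

Lemma dotv0l u : dotv 0 u = 0.
Proof. by rewrite -(scale0r 0) dotvZl mul0r. Qed.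

Lemma dotv0r u : dotv u 0 = 0.
Proof. by rewrite dotvC dotv0l. Qed.

Lemma sqr_coord_le_dotv u i : u ord0 i ^+ 2 <= dotv u u.
Proof.
rewrite /dotv (bigD1 i) //= -expr2 lerDl.
by apply: sumr_ge0 => j _; exact: sqr_ge0.
Qed.

Lemma dotv_ge0 u : 0 <= dotv u u.
Proof. by apply: sumr_ge0 => i _; exact: sqr_ge0. Qed.

Lemma dotv_eq0 u : (dotv u u == 0) = (u == 0).
Proof.
apply/eqP/eqP => [u0|->]; last exact: dotv0l.
apply/rowP => i; rewrite mxE; apply/eqP; rewrite -sqrf_eq0 eq_le sqr_ge0 andbT.
by rewrite -u0 sqr_coord_le_dotv.
Qed.

Lemma enorm_ge0 u : 0 <= enorm u.
Proof. exact: sqrtr_ge0. Qed.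

Lemma sqr_enorm u : enorm u ^+ 2 = dotv u u.
Proof. by rewrite sqr_sqrtr // dotv_ge0. Qed.

Lemma dotv_amgm u v : 2 * dotv u v <= dotv u u + dotv v v.
Proof. by have := dotv_ge0 (u - v); rewrite !dotvBl !dotvBr (dotvC v u); lra. Qed.

Lemma dotv_le_enorm u v : dotv u v <= enorm u * enorm v.
Proof.
have pos w : w != 0 -> 0 < enorm w.
  by move=> w0; rewrite sqrtr_gt0 lt_def dotv_eq0 w0 dotv_ge0.
have [->|/pos nu] := eqVneq u 0; first by rewrite dotv0l mulr_ge0 ?enorm_ge0.
have [->|/pos nv] := eqVneq v 0; first by rewrite dotv0r mulr_ge0 ?enorm_ge0.
(* the squared norm of |v| u - |u| v is 2 |u| |v| (|u| |v| - <u, v>) *)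
have := dotv_ge0 (enorm v *: u - enorm u *: v).
rewrite !dotvBl !dotvBr !dotvZl !dotvZr (dotvC v u) -!sqr_enorm.
have nuv : 0 < enorm u * enorm v by rewrite mulr_gt0.
nra.
Qed.

Lemma dotv_mulmx_trmx (J : 'M[R]_n) u v : dotv (u *m J^T) v = dotv u (v *m J).
Proof.
have dotvE w w' : dotv w w' = (w *m w'^T) ord0 ord0.
  by rewrite mxE; apply: eq_bigr => i _; rewrite mxE.
by rewrite !dotvE -mulmxA trmx_mul.
Qed.

End dotv_theory.

Lemma le0_of_le_div_neary {R : realFieldType} (g K : R) :
  (\forall C \near +oo, g <= K / C) -> g <= 0.
Proof.
move=> gK; have CK : K / C @[C --> +oo] --> 0.
  rewrite -[X in _ --> X](mulr0 K); apply: cvgM; first exact: cvg_cst.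
  by apply/gtr0_cvgV0; [exact: nbhs_pinfty_gt | exact: cvg_id].
exact: ler_cvg_to (cvg_cst g) CK gK.
Qed.

Lemma lee_fin_lbounds {R : realDomainType} (M : \bar R) (a : R) :
  (forall r, (r%:E <= M)%E -> r <= a) -> (M <= a%:E)%E.
Proof.
case: M => [r | | ] Ma; first by rewrite lee_fin Ma.
- by have := Ma (a + 1) (leey _); rewrite leNgt ltrDl ltr01.
- exact: leNye.
Qed.


Section dotv_topology.
Context {R : realType} {n : nat}.
Local Notation V := 'rV[R]_n.

Lemma cvg_dotv {T} {F : set_system T} {FF : Filter F} {f g : T -> V} {a b : V} :
  f @ F --> a -> g @ F --> b -> dotv (f t) (g t) @[t --> F] --> dotv a b.
Proof.
move=> fa gb; apply: (cvg_big (@add_continuous R^o)) => // i _.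
apply: cvgM; apply: (continuous_cvg _ (@coord_continuous R 1 n ord0 i _)) => //.
Qed.

Lemma cvg_enorm {T} {F : set_system T} {FF : Filter F} {f : T -> V} {a : V} :
  f @ F --> a -> enorm (f t) @[t --> F] --> enorm a.
Proof. by move=> fa; apply: (continuous_cvg _ (@sqrt_continuous R _)); exact: cvg_dotv. Qed.

Lemma nbhs_eball {d : V} {rho : R} {x : V} : enorm (x - d) < rho -> nbhs x (eball d rho).
Proof.
move=> xd; have : enorm (y - d) @[y --> x] --> enorm (x - d).
  exact: cvg_enorm (cvgB cvg_id (cvg_cst d)).
by move/cvgr_lt/(_ _ xd); apply: filterS => y /ltW.
Qed.

Lemma bounded_seq_cluster {a : nat -> V} {p : V} {M : R} :
  (forall k, dotv (a k - p) (a k - p) <= M) -> exists c, cluster (a @ \oo) c.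
Proof.
move=> aM; pose I i := `[p ord0 i - (M + 1), p ord0 i + (M + 1)]%classic.
have cC : compact [set v : V | forall i, I i (v ord0 i)].
  by apply: rV_compact => i; exact: segment_compact.
have M0 : 0 <= M by apply: le_trans (aM 0%N); exact: dotv_ge0.
have aC : (a @ \oo) [set v : V | forall i, I i (v ord0 i)].
  exists 0%N => // k _ i; rewrite /I /= in_itv /=.
  have := sqr_coord_le_dotv (a k - p) i; rewrite !mxE; have := aM k.
  by move: (a k ord0 i) (p ord0 i) => z y ? ?; apply/andP; split; nra.
by have [c [_ ?]] := cC _ _ aC; exists c.
Qed.

Lemma cluster_subseq {a : nat -> V} {c : V} : cluster (a @ \oo) c ->
  exists j : nat -> nat, j @ \oo --> \oo /\ (a \o j) @ \oo --> c.
Proof.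
move=> ac.
have close m : exists k, (m <= k)%N /\ `|c - a k| < harmonic m.
  have [||_ [[k /= mk <-]]] := ac (a @` [set k | (m <= k)%N]) (ball c (harmonic m)).
  - by exists m => // k /= mk; exists k.
  - exact/nbhsx_ballx/harmonic_gt0.
  by rewrite -ball_normE; exists k.
have [j hj] := choice close; exists j; split.
  apply/cvgnyPge => m; exists m => // k /= mk.
  by case: (hj k) => /(leq_trans mk).
apply/cvgrPdist_lt => e e0; near=> m.
by case: (hj m) => _ /lt_trans; apply; near: m; exact: (cvgr_lt _ cvg_harmonic).
Unshelve. all: by end_near.
Qed.

End dotv_topology.

Section convex_analysis.
Context {R : realType} {n : nat}.
Local Notation V := 'rV[R]_n.
Implicit Types (q : V -> \bar R) (x y p : V).

Lemma subdiff_monotone {q x1 y1 x2 y2} : subdiff q x1 y1 -> subdiff q x2 y2 ->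
  0 <= dotv (y1 - y2) (x1 - x2).
Proof.
case=> /fineK e1 /(_ x2) h1 [/fineK e2 /(_ x1)].
move: h1; rewrite -e1 -e2 -!EFinD !lee_fin dotvBl !dotvBr; lra.
Qed.

Lemma lsc_funDr q (g : V -> R) : lsc_fun q -> continuous g ->
  lsc_fun (fun e => (q e + (g e)%:E)%E).
Proof.
move=> ql gc x a aqg.
have [b [gb bq]] : exists b, a - g x < b /\ (b%:E < q x)%E.
  case: (q x) aqg => [r | _ | ] /=.
  - by rewrite -EFinD lte_fin => h; exists ((a - g x + r) / 2); rewrite lte_fin; lra.
  - by exists (a - g x + 1); split; [lra | exact: ltry].
  - by rewrite addNye.
near=> y; rewrite -(subrK b a) addrC EFinD.
apply: lte_leD => //; first by near: y; exact: ql.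
by rewrite lee_fin ltW //; near: y; apply: (cvgr_gt _ (gc x)); lra.
Unshelve. all: by end_near.
Qed.

Lemma lsc_cluster_le {F : V -> \bar R} {a : nat -> V} {c : V} {b : R} : lsc_fun F ->
  cluster (a @ \oo) c -> (\forall k \near \oo, (F (a k) <= b%:E)%E) ->
  (F c <= b%:E)%E.
Proof.
move=> Fl ac Fa; rewrite leNgt; apply/negP => /Fl Fc.
have [y [/= yle ylt]] := ac [set y | (F y <= b%:E)%E] _ Fa Fc.
by move: ylt; rewrite ltNge yle.
Qed.

Definition prox_objective q (c : R) p e : \bar R :=
  (q e + (c / 2 * dotv (e - p) (e - p))%:E)%E.

Lemma lsc_prox_objective q c p : lsc_fun q -> lsc_fun (prox_objective q c p).
Proof.
move=> ql; apply: lsc_funDr => // z.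
exact: cvgM (cvg_cst _) (cvg_dotv (cvgB cvg_id (cvg_cst p)) (cvgB cvg_id (cvg_cst p))).
Qed.

Lemma prox_objective_ge q c p x y e : 0 < c -> q e != -oo%E -> subdiff q x y ->
  ((fine (q x) + dotv y (p - x) - dotv y y / c + c / 4 * dotv (e - p) (e - p))%:E
    <= prox_objective q c p e)%E.
Proof.
move=> c0 qe [/fineK qx /(_ e)]; rewrite /prox_objective.
case: (q e) qe => [r _ | _ | //]; last by rewrite addye ?leey.
rewrite -qx /= -!EFinD !lee_fin.
have -> : dotv y (e - x) = dotv y (e - p) + dotv y (p - x) by rewrite -dotvDr addrA subrK.
have yc : dotv y y / c * c = dotv y y by rewrite divfK ?gt_eqF.
have := dotv_ge0 ((c / 2) *: (e - p) + y).
move: (e - p) (p - x) => w v; rewrite dotvDl !dotvDr !dotvZl !dotvZr (dotvC y w).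
move: (dotv y y / c) yc => K yc; nra.
Qed.

Lemma exists_prox_objective_min q c p x y : 0 < c ->
  proper_fun q -> lsc_fun q -> subdiff q x y ->
  exists xi, forall e, (prox_objective q c p xi <= prox_objective q c p e)%E.
Proof.
move=> c0 [qN _] ql xy; set F := prox_objective q c p.
set L := fine (q x) + dotv y (p - x) - dotv y y / c.
have FL e : ((L + c / 4 * dotv (e - p) (e - p))%:E <= F e)%E.
  exact: prox_objective_ge.
have [m infm] : exists m, ereal_inf (range F) = m%:E.
  have : (L%:E <= ereal_inf (range F))%E.
    apply/ereal_infP => _ [e _ <-]; apply: le_trans (FL e).
    by rewrite lee_fin lerDl mulr_ge0 ?dotv_ge0 ?divr_ge0 ?ltW.
  have : (ereal_inf (range F) <= F x)%E by apply: ereal_inf_lbound; exists x.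
  rewrite /F /prox_objective -(fineK xy.1).
  case: ereal_inf => [r _ _ | | ]; first by exists r.
  - by rewrite -EFinD leye_eq.
  - by rewrite leeNy_eq.
have near_inf k : exists e, (F e < (m + harmonic k)%:E)%E.
  have : (ereal_inf (range F) < (m + harmonic k)%:E)%E.
    by rewrite infm lte_fin ltrDl harmonic_gt0.
  by case/ereal_inf_lt => _ [e _ <-]; exists e.
have [eta etam] := choice near_inf.
have [xi etaxi] : exists xi, cluster (eta @ \oo) xi.
  apply: (bounded_seq_cluster (p := p) (M := (m + 1 - L) / (c / 4))) => k.
  rewrite ler_pdivlMr ?divr_gt0 // mulrC.
  have := le_lt_trans (FL (eta k)) (etam k); rewrite lte_fin.
  have : harmonic k <= 1 :> R by rewrite /= invf_le1 ?ler1n ?ltr0n.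
  lra.
exists xi => e.
have infFe : (ereal_inf (range F) <= F e)%E by apply: ereal_inf_lbound; exists e.
apply: (le_trans _ infFe); rewrite infm; apply/lee_addgt0Pr => eps eps0; rewrite -EFinD.
apply: (lsc_cluster_le (lsc_prox_objective q c p ql) etaxi).
near=> k; apply/ltW/(lt_le_trans (etam k)); rewrite lee_fin lerD2l ltW //.
by near: k; exact: (cvgr_lt _ cvg_harmonic).
Unshelve. all: by end_near.
Qed.

Lemma prox_objective_min_subdiff q c p xi : 0 < c -> proper_fun q -> convex_fun q ->
  (forall e, (prox_objective q c p xi <= prox_objective q c p e)%E) ->
  subdiff q xi (c *: (p - xi)).
Proof.
move=> c0 [qN [x0 qx0]] qc ximin.
have [r qxi] : exists r, q xi = r%:E.
  move: (qN xi) (ximin x0); rewrite /prox_objective -(fineK qx0).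
  case: (q xi) => [r _ _ | _ | /eqP //]; first by exists r.
  by rewrite addye // leye_eq.
split=> [|e]; first by rewrite qxi.
rewrite qxi; case qe : (q e) => [re | | ]; last 2 first.
- by rewrite leey.
- by move: (qN e); rewrite qe.
rewrite -EFinD lee_fin dotvZl -subr_le0.
apply: (@le0_of_le_div_neary _ _ (c / 2 * dotv (e - xi) (e - xi))).
near=> C; have C1 : 1 < C by near: C; exact: nbhs_pinfty_gt.
set t := C^-1; have t0 : 0 < t by rewrite invr_gt0 (lt_trans ltr01).
have t1 : t < 1 by rewrite invf_lt1 // (lt_trans ltr01).
set z := t *: e + (1 - t) *: xi.
move: (qc e xi t) (ximin z); rewrite t0 t1 qe qxi -!EFinM -EFinD /prox_objective qxi.
case: (q z) (qN z) => [rz _ | _ /(_ isT) | /eqP //]; last by rewrite leye_eq.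
have -> : z - p = (xi - p) + t *: (e - xi) by apply/rowP => i; rewrite !mxE; ring.
move=> /(_ isT); rewrite -!EFinD !lee_fin.
rewrite -[p - xi]opprB dotvNl; move: (xi - p) (e - xi) => u w.
rewrite dotvDl !dotvDr !dotvZl !dotvZr (dotvC w u).
nra.
Unshelve. all: by end_near.
Qed.

Lemma exists_prox q c p x y : 0 < c ->
  proper_fun q -> convex_fun q -> lsc_fun q -> subdiff q x y ->
  exists xi, subdiff q xi (c *: (p - xi)).
Proof.
move=> c0 qp qc ql xy; have [xi ximin] := exists_prox_objective_min q c p x y c0 qp ql xy.
by exists xi; exact: prox_objective_min_subdiff.
Qed.

End convex_analysis.

Section normal_cones.
Context {R : realType} {n : nat}.
Local Notation V := 'rV[R]_n.
Implicit Types (q : V -> \bar R) (x y u s d ds : V).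

Definition strongly_monotone_on q (B : set V) (mu : R) : Prop :=
  forall x1 y1 x2 y2, B x1 -> B x2 -> subdiff q x1 y1 -> subdiff q x2 y2 ->
    mu * dotv (x1 - x2) (x1 - x2) <= dotv (y1 - y2) (x1 - x2).

Lemma tangent_strongly_monotone {q B mu x y w ws} :
  strongly_monotone_on q B mu -> nbhs x B -> subdiff q x y ->
  tangent_cone (gph_subdiff q) (x, y) (w, ws) -> mu * dotv w w <= dotv ws w.
Proof.
move=> qmu Bx xy [t [wk [t0 [t0c [wkc wkC]]]]].
have w1c : (fun k => (wk k).1) @ \oo --> w by apply: cvg_comp wkc _; exact: cvg_fst.
have w2c : (fun k => (wk k).2) @ \oo --> ws by apply: cvg_comp wkc _; exact: cvg_snd.
have shift : (fun k => x + t k *: (wk k).1) @ \oo --> x.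
  rewrite -[X in _ --> X]addr0; apply: cvgD; first exact: cvg_cst.
  by rewrite -(scale0r w); exact: cvgZ.
have Bk : \forall k \near \oo, B (x + t k *: (wk k).1) := shift _ Bx.
apply: (ler_cvg_to (cvgM (cvg_cst mu) (cvg_dotv w1c w1c)) (cvg_dotv w2c w1c)).
near=> k; have Bxk : B (x + t k *: (wk k).1) by near: k.
have /= := qmu _ _ _ _ Bxk (nbhs_singleton Bx) (wkC k) xy.
rewrite [x + _]addrC addrK [y + _]addrC addrK !dotvZl !dotvZr.
have tt : 0 < t k * t k by rewrite mulr_gt0.
nra.
Unshelve. all: by end_near.
Qed.

Lemma tangent_prox_direction q c x y s : 0 < c ->
  proper_fun q -> convex_fun q -> lsc_fun q -> subdiff q x y ->
  exists z, tangent_cone (gph_subdiff q) (x, y) (z, - c *: (z + s)).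
Proof.
(* the proximal point x_k of x + y/c - lam_k s satisfies
   (x_k, c (x + y/c - lam_k s - x_k)) = (x, y) + lam_k (a_k, -c (a_k + s)),
   and the monotonicity of the subdifferential keeps a_k bounded *)
move=> c0 qp qc ql xy; pose lam := @harmonic R.
have [xk xkP] := choice (fun k => exists_prox q c (x + c^-1 *: y - lam k *: s) x y c0 qp qc ql xy).
pose a k := (lam k)^-1 *: (xk k - x).
have xkE k : xk k = x + lam k *: a k.
  by rewrite /a scalerA divff ?gt_eqF ?harmonic_gt0 // scale1r addrC subrK.
clearbody a.
have ykE k : c *: (x + c^-1 *: y - lam k *: s - xk k) = y + lam k *: (- c *: (a k + s)).
  by rewrite xkE; apply/rowP => i; rewrite !mxE; field; rewrite gt_eqF.
have aB k : dotv (a k - 0) (a k - 0) <= dotv s s.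
  have l0 : 0 < lam k := harmonic_gt0 k.
  have := subdiff_monotone (xkP k) xy; rewrite ykE xkE [x + _]addrC addrK [y + _]addrC addrK.
  rewrite !dotvZl !dotvZr pmulr_rge0 // dotvDl (dotvC s (a k)) => mono.
  have inner : dotv (a k) (a k) + dotv (a k) s <= 0 by have := mulr_gt0 c0 l0; nra.
  by have := dotv_amgm (a k) (- s); rewrite subr0 !(dotvNl, dotvNr) opprK; lra.
have [z az] := bounded_seq_cluster aB.
have [j [joo ajz]] := cluster_subseq az.
exists z, (lam \o j), (fun m => (a (j m), - c *: (a (j m) + s))); split=> [m|].
  exact: harmonic_gt0.
split; first exact: cvg_comp joo cvg_harmonic.
split; first exact: cvg_pair ajz (cvgZ (cvg_cst _) (cvgD ajz (cvg_cst s))).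
by move=> m; rewrite /gph_subdiff /= -xkE -ykE; exact: xkP.
Qed.

Lemma normal_tangent_bound {u z s} {c mu : R} : 0 < c + mu ->
  dotv u z + c * dotv s (z + s) <= 0 -> mu * dotv z z <= - c * dotv (z + s) z ->
  - dotv (u - (2 * mu) *: s) (u - (2 * mu) *: s)
    <= 4 * (c + mu) * (dotv u s - mu * dotv s s).
Proof.
move=> cmu hT hM; have := dotv_ge0 ((2 * (c + mu)) *: (z + s) + (u - (2 * mu) *: s)).
move: hT hM; rewrite !(dotvDl, dotvDr, dotvNl, dotvNr, dotvZl, dotvZr).
rewrite !(dotvC z u) !(dotvC s u) !(dotvC s z).
move: (dotv u u) (dotv u z) (dotv u s) (dotv z z) (dotv z s) (dotv s s).
move=> uu uz us zz zs ss; nra.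
Qed.

Lemma reg_normal_strongly_monotone {q B mu x y u s} :
  proper_fun q -> convex_fun q -> lsc_fun q ->
  strongly_monotone_on q B mu -> nbhs x B -> subdiff q x y ->
  reg_normal (gph_subdiff q) (x, y) (u, - s) -> mu * dotv s s <= dotv u s.
Proof.
move=> qp qc ql qmu Bx xy us.
set v := u - (2 * mu) *: s; set G := dotv u s - mu * dotv s s.
rewrite -subr_ge0 -/G -oppr_le0; apply: (@le0_of_le_div_neary _ _ (dotv v v)).
near=> C; have Cmu : 4 * `|mu| < C by near: C; exact: nbhs_pinfty_gt.
pose c := C / 4 - mu; have cmu : 4 * (c + mu) = C by rewrite /c subrK mulrC divfK.
have c0 : 0 < c by rewrite /c subr_gt0; have := ler_norm mu; lra.
have [z zT] := tangent_prox_direction q c x y s c0 qp qc ql xy.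
have zN : dotv u z + c * dotv s (z + s) <= 0.
  by have := us _ zT; rewrite /dotp /= dotvNl dotvZr mulNr opprK.
have zM := tangent_strongly_monotone qmu Bx xy zT; rewrite dotvZl in zM.
have cmu0 : 0 < c + mu by have := normr_ge0 mu; lra.
have := normal_tangent_bound cmu0 zN zM; rewrite cmu -/v -/G => bound.
by rewrite ler_pdivlMr; lra.
Unshelve. all: by end_near.
Qed.

Lemma lim_normal_strongly_monotone {q d ds u s rho mu} :
  proper_fun q -> convex_fun q -> lsc_fun q -> 0 < rho ->
  strongly_monotone_on q (eball d rho) mu ->
  lim_normal (gph_subdiff q) (d, ds) (u, - s) -> mu * dotv s s <= dotv u s.
Proof.
move=> qp qc ql rho0 qmu [zk [zsk [zkC [zkc [zkN zskc]]]]].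
have xc : (fun k => (zk k).1) @ \oo --> d by apply: cvg_comp zkc _; exact: cvg_fst.
have uc : (fun k => (zsk k).1) @ \oo --> u by apply: cvg_comp zskc _; exact: cvg_fst.
have sc : (fun k => - (zsk k).2) @ \oo --> s.
  by rewrite -[s]opprK; apply: cvgN; apply: cvg_comp zskc _; exact: cvg_snd.
have near_d : \forall k \near \oo, enorm ((zk k).1 - d) < rho.
  apply: (cvgr_lt _ (cvg_enorm (cvgB xc (cvg_cst d)))).
  by rewrite subrr /enorm dotv0l sqrtr0.
apply: (ler_cvg_to (cvgM (cvg_cst mu) (cvg_dotv sc sc)) (cvg_dotv uc sc)).
near=> k => /=; have kd : enorm ((zk k).1 - d) < rho by near: k.
apply: (reg_normal_strongly_monotone qp qc ql qmu (nbhs_eball kd) (zkC k)).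
by rewrite opprK -!surjective_pairing.
Unshelve. all: by end_near.
Qed.

Lemma mu_q_rho_strongly_monotone q d rho mu :
  (mu%:E <= mu_q_rho q d rho)%E -> strongly_monotone_on q (eball d rho) mu.
Proof.
move=> mule x1 y1 x2 y2 B1 B2 s1 s2.
have [->|x12] := eqVneq x1 x2; first by rewrite subrr !dotv0r mulr0.
have pos : 0 < dotv (x1 - x2) (x1 - x2) by rewrite lt_def dotv_eq0 subr_eq0 x12 dotv_ge0.
have : (mu_q_rho q d rho <= (dotv (y1 - y2) (x1 - x2) / enorm (x1 - x2) ^+ 2)%:E)%E.
  by apply: ereal_inf_lbound; exists x1, y1, x2, y2.
by move/(le_trans mule); rewrite lee_fin sqr_enorm ler_pdivlMr // mulrC.
Qed.

Lemma mu_q_rho_le_coderiv {q d ds u s rho} :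
  proper_fun q -> convex_fun q -> lsc_fun q -> 0 < rho -> enorm s = 1 ->
  lim_normal (gph_subdiff q) (d, ds) (u, - s) -> (mu_q_rho q d rho <= (dotv u s)%:E)%E.
Proof.
move=> qp qc ql rho0 s1 us; apply: lee_fin_lbounds => mu /mu_q_rho_strongly_monotone qmu.
have := lim_normal_strongly_monotone qp qc ql rho0 qmu us.
by rewrite -sqr_enorm s1 expr1n mulr1.
Qed.

Lemma mu_q_le_coderiv {q d ds u s} :
  proper_fun q -> convex_fun q -> lsc_fun q -> enorm s = 1 ->
  coderiv_subdiff q d ds s u -> (mu_q q d <= (dotv u s)%:E)%E.
Proof.
move=> qp qc ql s1 us.
have mu_q_rho_nonincr : {in `]0, +oo[ &, {homo mu_q_rho q d : a b / a <= b >-> (b <= a)%E}}.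
  move=> r1 r2 _ _ r12; apply: ereal_inf_le_tmp => _ [x1 [y1 [x2 [y2 [[B1 B2] s1' s2' x12 ->]]]]].
  by exists x1, y1, x2, y2; split => //; split; [exact: le_trans B1 r12 | exact: le_trans B2 r12].
rewrite /mu_q (cvg_lim _ (nonincreasing_at_right_cvge (BInfty R false) isT mu_q_rho_nonincr)) //.
apply: ge_ereal_sup => _ [r /= r0 <-]; rewrite in_itv /= andbT in r0.
exact: mu_q_rho_le_coderiv qp qc ql r0 s1 us.
Qed.

End normal_cones.

Theorem lemma4p4 (R : realType) (n : nat) (f : 'rV[R]_n -> 'rV[R]_n)
    (q : 'rV[R]_n -> \bar R) (x d ds : 'rV[R]_n) :
  C1 f -> monotone_map f ->
  proper_fun q -> convex_fun q -> lsc_fun q ->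
  dom_subdiff q d -> subdiff q d ds ->
  forall s : 'rV[R]_n, enorm s = 1 ->
    (mu_f f x + mu_q q d <=
      dist0 [set (s *m (jacobian f x)^T + u)%R | u in coderiv_subdiff q d ds s])%E.
Proof.
move=> _ _ qp qc ql _ _ s s1.
apply: le_ereal_inf_tmp => _ [_ [u us <-] <-].
have muf : (mu_f f x <= (dotv (s *m jacobian f x) s)%:E)%E.
  by apply: ereal_inf_lbound; exists s.
apply: le_trans (leeD muf (mu_q_le_coderiv qp qc ql s1 us)) _.
rewrite -EFinD lee_fin dotvC -dotv_mulmx_trmx -dotvDl.
by have := dotv_le_enorm (s *m (jacobian f x)^T + u) s; rewrite s1 mulr1.
Qed.
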